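(* Let $(U,\mathrm{dist})$ be a metric space, $\gamma>0$, $\eta>0$, $\Lambda\in\mathbb{R}_{>0}\cup\{\infty\}$, $\nu>1$. Let $f:U\to\mathbb{R}$ and let $B(\cdot)$ be a $g_E$-smooth upper bound on $\mathrm{L}_{f,\Lambda}$, where $g_E(x,x')=e^{\gamma\,\mathrm{dist}(x,x')}$. Then the mechanism $M$ which on input $x$ releases $M(x)=f(x)+\frac{B(x)}{\eta}Z$ with $Z\sim\mathcal{T}_\nu(0,1)$ is $(\varepsilon,0,\Lambda)$-GP, where $\varepsilon=\nu\gamma+\frac{\nu+1}{2\sqrt{\nu}}\eta$.
   Context: $\mathrm{L}_{f,\Lambda}(x)$ is the infimum of all $K$ such that $|f(x)-f(x')|\le K\,\mathrm{dist}(x,x')$ for all $x'\in U$ with $\mathrm{dist}(x,x')\le\Lambda$. A $g$-smooth upper bound on $\mathrm{L}_{f,\Lambda}$ is $B:U\to\mathbb{R}_{\ge0}$ with (1) $B(x)\ge\mathrm{L}_{f,\Lambda}(x)$ for all $x$ and (2) $B(x)\le g(x,x')B(x')$ for all $x,x'\in U$. $\mathcal{T}_\nu(0,1)$ is Student's $t$-distribution with $\nu$ degrees of freedom, density $\frac{c_\nu}{\sqrt\nu}(1+y^2/\nu)^{-(\nu+1)/2}$, $c_\nu=\frac{\Gamma((\nu+1)/2)}{\sqrt\pi\,\Gamma(\nu/2)}$. A mechanism $M$ with outputs in $\mathbb{R}$ is $(\varepsilon,\delta,\Lambda)$-GP if for every measurable $S\subseteq\mathbb{R}$ and all $x,x'$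 with $\mathrm{dist}(x,x')\le\Lambda$: $\Pr[M(x)\in S]\le e^{\varepsilon\,\mathrm{dist}(x,x')}\Pr[M(x')\in S]+\delta$. *)

From HB Require Import structures.
From mathcomp Require Import all_boot all_order all_algebra.
From mathcomp Require Import all_classical all_reals all_analysis.
Set Implicit Arguments. Unset Strict Implicit. Unset Printing Implicit Defensive.
Import Order.TTheory GRing.Theory Num.Theory.
Import numFieldNormedType.Exports.
Local Open Scope classical_set_scope.
Local Open Scope ring_scope.

Definition Gamma {R : realType} (s : R) : R :=
  fine (\int[@lebesgue_measure R]_(t in `]0%R, +oo[)
          ((t `^ (s - 1)) * expR (- t))%:E)%E.

Definition t_const {R : realType} (nu : R) : R :=
  Gamma ((nu + 1) / 2) / (Num.sqrt pi * Gamma (nu / 2)).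

Definition t_density {R : realType} (nu : R) (y : R) : R :=
  t_const nu / Num.sqrt nu * (1 + y ^+ 2 / nu) `^ (- ((nu + 1) / 2)).

Definition local_lip {R : realType} {U : Type} (dist : U -> U -> R)
    (f : U -> R) (Lambda : \bar R) (x : U) : \bar R :=
  ereal_inf [set K%:E | K in
     [set K : R | forall x' : U, ((dist x x')%:E <= Lambda)%E ->
                     `|f x - f x'| <= K * dist x x']].

Definition smooth_upper_bound {R : realType} {U : Type} (dist : U -> U -> R)
    (f : U -> R) (Lambda : \bar R) (g : U -> U -> R) (B : U -> R) : Prop :=
  (forall x, 0 <= B x) /\
  (forall x, (local_lip dist f Lambda x <= (B x)%:E)%E) /\
  (forall x x', B x <= g x x' * B x').

(* Pr[M(x) \in S] for M(x) = f x + (B x / eta) Z, Z ~ T_nu(0,1):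
   the T_nu-measure of {z | f x + (B x / eta) z \in S}. *)
Definition mech_prob {R : realType} {U : Type} (f B : U -> R) (eta nu : R)
    (x : U) (S : set R) : \bar R :=
  (\int[@lebesgue_measure R]_(z in [set z | S (f x + B x / eta * z)%R])
      (t_density nu z)%:E)%E.

(* M(x) has density y |-> b^-1 p((y - f x) / b) with b = B x / eta and p the
   T_nu density, so it suffices to bound the ratio of the densities of M(x) and
   M(x') pointwise by e^(eps d(x,x')).  Up to a constant, ln p(z) is
   -((nu + 1) / 2) ln (1 + z^2 / nu), and ln (1 + z^2 / nu) is
   (1 / sqrt nu)-Lipschitz.  Shifting the location by |f x - f x'| <= B x d =
   eta b d therefore costs at most (nu + 1) / (2 sqrt nu) eta d, while changing
   the scale by a factor within e^(+-gamma d), which is what g_E-smoothness of B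
   gives, costs at most nu gamma d. *)

From HB Require Import structures.
From mathcomp Require Import all_boot all_order all_algebra.
From mathcomp Require Import all_classical all_reals all_analysis.
From mathcomp Require Import ring lra measurable_realfun.
Import Order.TTheory GRing.Theory Num.Theory.
Import numFieldNormedType.Exports.
Local Open Scope classical_set_scope.
Local Open Scope ring_scope.

Section ln1Dsqr.
Context {R : realType}.

Lemma ger0_is_derive_ndecr (f df : R -> R) :
  (forall t : R, is_derive t (1 : R) f (df t)) -> (forall t, 0 <= df t) ->
  {homo f : u v / u <= v}.
Proof.
move=> f_df df_ge0 u v uv.
have [|c _ fvu] := MVT_segment uv (fun t _ => f_df t).
  apply/continuous_subspaceT => t.
  by apply/differentiable_continuous/derivable1_diffP; have [] := f_df t.
by rewrite -subr_ge0 fvu mulr_ge0 // subr_ge0.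
Qed.

Lemma ln1DsqrB_le (u v : R) : ln (1 + v ^+ 2) - ln (1 + u ^+ 2) <= `|v - u|.
Proof.
have ndecr : {homo (fun t : R => t - ln (1 + t ^+ 2)) : s t / s <= t}.
  apply: (@ger0_is_derive_ndecr _ (fun t => 1 - (1 + t ^+ 2)^-1 * (t *+ 2))) => t;
    have t2_gt0 : 0 < 1 + t ^+ 2 by rewrite ltr_pwDl // sqr_ge0.
  - apply: is_deriveB.
    apply: (@is_derive1_comp _ _ (fun t => 1 + t ^+ 2)); first exact: is_derive1_ln.
    apply: is_derive_eq.
    by rewrite add0r mul1r mulr2n -[t%:A]/(t * 1) mulr1.
  - rewrite subr_ge0 ler_pdivrMl // mulr1 -subr_ge0.
    have -> : 1 + t ^+ 2 - t *+ 2 = (t - 1) ^+ 2 by rewrite sqrrB1; ring.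
    exact: sqr_ge0.
have [uv|vu] := leP u v.
  have := ndecr u v uv.
  rewrite ger0_norm ?subr_ge0 //; lra.
have Nvu : - u <= - v by rewrite lerN2 ltW.
have := ndecr _ _ Nvu.
rewrite !sqrrN ltr0_norm ?subr_lt0 //; lra.
Qed.

End ln1Dsqr.

Section student_t_density.
Context {R : realType}.
Implicit Types nu c t u w z : R.

Definition t_logkernel nu t : R := ln (1 + t ^+ 2 / nu).

Lemma t_densityE nu t : 0 < nu ->
  t_density nu t = t_const nu / Num.sqrt nu * expR (- ((nu + 1) / 2) * t_logkernel nu t).
Proof.
move=> nu_gt0; rewrite /t_density /t_logkernel /powR ifF // gt_eqF //.
by rewrite ltr_pwDl // divr_ge0 ?sqr_ge0 ?ltW.
Qed.

Lemma Gamma_ge0 (s : R) : 0 <= Gamma s.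
Proof.
apply/fine_ge0/integral_ge0 => t _.
by rewrite lee_fin mulr_ge0 ?powR_ge0 ?expR_ge0.
Qed.

Lemma t_const_sqrt_ge0 nu : 0 <= t_const nu / Num.sqrt nu.
Proof. by rewrite /t_const !divr_ge0 ?mulr_ge0 ?Gamma_ge0 ?sqrtr_ge0. Qed.

Lemma t_density_ge0 nu t : 0 <= t_density nu t.
Proof. by rewrite /t_density mulr_ge0 ?powR_ge0 ?t_const_sqrt_ge0. Qed.

Lemma t_logkernelB_le nu z w : 0 < nu ->
  t_logkernel nu w - t_logkernel nu z <= `|z - w| / Num.sqrt nu.
Proof.
move=> nu_gt0; have sqrt_gt0 : 0 < Num.sqrt nu by rewrite sqrtr_gt0.
have sqrtE t : t_logkernel nu t = ln (1 + (t / Num.sqrt nu) ^+ 2).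
  by rewrite /t_logkernel expr_div_n sqr_sqrtr // ltW.
rewrite !sqrtE (le_trans (ln1DsqrB_le _ _)) // -mulrBl normrM distrC.
by rewrite ger0_norm // invr_ge0 ltW.
Qed.

(* For [c >= 1] the kernel difference is nonpositive; for [c < 1] it is at most
   [- 2 ln c], and [ln c - (nu + 1) ln c = - nu ln c]. *)
Lemma t_logkernel_scale_le nu c u : 1 <= nu -> 0 < c ->
  ln c + (nu + 1) / 2 * (t_logkernel nu u - t_logkernel nu (u * c))
    <= nu * `|ln c|.
Proof.
move=> nu_ge1 c_gt0; have nu_gt0 : 0 < nu by apply: lt_le_trans nu_ge1.
have k_ge0 : 0 <= (nu + 1) / 2 by rewrite divr_ge0 //; lra.
have arg_gt0 t : 0 < 1 + t ^+ 2 / nu by rewrite ltr_pwDl // divr_ge0 ?sqr_ge0 ?ltW.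
have [c_ge1|c_lt1] := leP 1 c.
  have kernel_le : t_logkernel nu u <= t_logkernel nu (u * c).
    rewrite /t_logkernel ler_ln ?posrE // lerD2l ler_pM2r ?invr_gt0 //.
    by rewrite exprMn ler_peMr ?sqr_ge0 // exprn_ege1.
  have := ler_wpM2l k_ge0 kernel_le.
  rewrite ger0_norm ?ln_ge0 //.
  have : ln c <= nu * ln c by rewrite ler_peMl // ln_ge0.
  lra.
have : t_logkernel nu u <= t_logkernel nu (u * c) - 2 * ln c.
  have -> : - (2 * ln c) = ln ((c ^-1) ^+ 2) by rewrite lnXn ?invr_gt0 // lnV ?posrE //; ring.
  rewrite /t_logkernel -lnM ?posrE ?exprn_gt0 ?invr_gt0 //.
  rewrite ler_ln ?posrE ?mulr_gt0 ?exprn_gt0 ?invr_gt0 // mulrDl mul1r.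
  have -> : (u * c) ^+ 2 / nu * c^-1 ^+ 2 = u ^+ 2 / nu.
    by field; rewrite !gt_eqF.
  by rewrite lerD2r exprn_ege1 // invf_ge1 // ltW.
move/(ler_wpM2l k_ge0).
rewrite ltr0_norm ?ln_lt0 ?c_gt0 //.
have : ln c < 0 by rewrite ln_lt0 // c_gt0.
lra.
Qed.
End student_t_density.

Section location_scale.
Context {R : realType}.

Definition t_locscale_density (nu a b y : R) : R := b^-1 * t_density nu ((y - a) / b).

Lemma t_locscale_density_ge0 (nu a b y : R) : 0 < b -> 0 <= t_locscale_density nu a b y.
Proof. by move=> b_gt0; rewrite mulr_ge0 ?t_density_ge0 // invr_ge0 ltW. Qed.

Lemma t_locscale_density_le (nu a a' b b' G H y : R) : 1 <= nu -> 0 < b -> 0 < b' ->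
  `|ln b - ln b'| <= G -> `|a - a'| <= H * b ->
  t_locscale_density nu a b y <=
    expR (nu * G + (nu + 1) / (2 * Num.sqrt nu) * H) * t_locscale_density nu a' b' y.
Proof.
move=> nu_ge1 b_gt0 b'_gt0 lnbb' aa'; have nu_gt0 : 0 < nu by apply: lt_le_trans nu_ge1.
have sqrt_gt0 : 0 < Num.sqrt nu by rewrite sqrtr_gt0.
set k := (nu + 1) / 2; have k_ge0 : 0 <= k by rewrite divr_ge0 //; lra.
set z := (y - a) / b; set u := (y - a') / b'; set w := u * (b' / b).
have shift : k * (t_logkernel nu w - t_logkernel nu z) <= k * (H / Num.sqrt nu).
  rewrite ler_wpM2l // (le_trans (t_logkernelB_le _ z w nu_gt0)) // ler_pM2r ?invr_gt0 //.
  have -> : z - w = (a' - a) / b by rewrite /z /w /u; field; rewrite !gt_eqF.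
  by rewrite normrM distrC gtr0_norm ?invr_gt0 // ler_pdivrMr.
have scale := t_logkernel_scale_le _ _ u nu_ge1 (divr_gt0 b'_gt0 b_gt0).
rewrite ln_div ?posrE // distrC in scale.
have {}scale : ln b' - ln b + k * (t_logkernel nu u - t_logkernel nu w) <= nu * G.
  exact: le_trans scale (ler_wpM2l (ltW nu_gt0) lnbb').
rewrite /t_locscale_density !t_densityE // -/z -/u -/k.
set K := t_const nu / Num.sqrt nu.
have factor (c e : R) : 0 < c -> c^-1 * (K * expR e) = K * expR (- ln c + e).
  by move=> c_gt0; rewrite expRD expRN lnK // mulrCA.
rewrite !factor // mulrCA -expRD ler_wpM2l ?t_const_sqrt_ge0 // ler_expR.
have -> : (nu + 1) / (2 * Num.sqrt nu) * H = k * (H / Num.sqrt nu).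
  by rewrite /k; field; rewrite gt_eqF.
lra.
Qed.
End location_scale.

Section affine_change_of_variables.
Context {R : realType} (a b : R).
Hypothesis b_gt0 : 0 < b.
Local Notation mu := (@lebesgue_measure R).
Local Notation affine := (fun z : measurableTypeR R => a + b * z : measurableTypeR R).

Let measurable_affine : measurable_fun [set: measurableTypeR R] affine.
Proof. by apply: measurable_funD => //; apply: measurable_funM. Qed.

Lemma lebesgue_measure_affine (A : set R) : measurable A ->
  pushforward mu affine A = (b^-1%:E * mu A)%E.
Proof.
move=> mA.
(* The pushforward is a measure only once [measurable_affine] is supplied: it
   appears below as the first premise of the uniqueness lemma. *)
have := @lebesgue_measure_unique R (mscale (NngNum (ltW b_gt0)) (pushforward mu affine)).
move=> /(_ measurable_affine _ A mA) -> /=.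
- by rewrite /mscale /= muleA -EFinM mulVf ?gt_eqF // mul1e.
move=> _ [[x1 x2] _ <-].
rewrite /mscale /= /pushforward.
have -> : affine @^-1` `]x1, x2] = `](x1 - a) / b, (x2 - a) / b]%classic.
  apply/seteqP; split => z /=; rewrite !in_itv /= ltr_pdivrMr // ler_pdivlMr // (mulrC z b).
    by move=> /andP[h1 h2]; apply/andP; split; lra.
  by move=> /andP[h1 h2]; apply/andP; split; lra.
rewrite !lebesgue_measure_itv /= !lte_fin ltr_pM2r ?invr_gt0 // ltrD2r.
case: ifPn => _; last by rewrite mule0.
by rewrite -!EFinD -EFinM; congr (_%:E); field; rewrite gt_eqF.
Qed.

Lemma ge0_integral_affine_preimage (S : set R) (h : R -> \bar R) :
  measurable S -> measurable_fun S h -> (forall y, S y -> (0 <= h y)%E) ->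
  (\int[mu]_(z in affine @^-1` S) h (a + b * z)%R = b^-1%:E * \int[mu]_(y in S) h y)%E.
Proof.
move=> mS mh h_ge0.
have bV_ge0 : 0 <= b^-1 by rewrite invr_ge0 ltW.
rewrite -(ge0_integral_mscale mu mS (NngNum bV_ge0) mh h_ge0).
rewrite -(ge0_integral_pushforward measurable_affine mu mS mh); last first.
  by move=> y /[!inE]; exact: h_ge0.
by apply: eq_measure_integral => A mA _; exact: lebesgue_measure_affine.
Qed.
End affine_change_of_variables.

Section t_affine_law.
Context {R : realType}.
Local Notation mu := (@lebesgue_measure R).

Lemma measurable_t_density (nu : R) : measurable_fun [set: R] (t_density nu).
Proof.
apply: measurable_funM => //; apply: (measurableT_comp (measurable_powR _)).
by apply: measurable_funD => //; apply: measurable_funM.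
Qed.

Lemma measurable_t_density_affine (nu a b : R) :
  measurable_fun [set: R] (fun y => t_density nu ((y - a) / b)).
Proof.
apply: measurableT_comp (measurable_t_density nu) _.
by apply: measurable_funM => //; apply: measurable_funB.
Qed.

Lemma measurable_t_locscale_density (nu a b : R) :
  measurable_fun [set: R] (t_locscale_density nu a b).
Proof. exact: measurable_funM (measurable_cst _) (measurable_t_density_affine nu a b). Qed.

Lemma t_affine_integralE (nu a b : R) (S : set R) : 0 < b -> measurable S ->
  (\int[mu]_(z in [set z | S (a + b * z)%R]) (t_density nu z)%:E =
   \int[mu]_(y in S) (t_locscale_density nu a b y)%:E)%E.
Proof.
move=> b_gt0 mS.
have mh : measurable_fun S (fun y => (t_density nu ((y - a) / b))%:E).
  by apply/measurable_EFinP/measurable_funTS; exact: measurable_t_density_affine.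
have h_ge0 y : S y -> (0 <= (t_density nu ((y - a) / b))%:E)%E.
  by rewrite lee_fin t_density_ge0.
transitivity (\int[mu]_(z in [set z | S (a + b * z)%R])
                (t_density nu ((a + b * z - a) / b))%:E)%E.
  by apply: eq_integral => z _; congr (_%:E); congr t_density; field; rewrite gt_eqF.
rewrite (ge0_integral_affine_preimage a b b_gt0 S _ mS mh h_ge0) -ge0_integralZl //.
by rewrite lee_fin invr_ge0 ltW.
Qed.

Lemma t_affine_prob_le (nu a a' b b' C : R) (S : set R) :
  measurable S -> 0 < b -> 0 < b' -> 0 <= C ->
  (forall y, t_locscale_density nu a b y <= C * t_locscale_density nu a' b' y) ->
  (\int[mu]_(z in [set z | S (a + b * z)%R]) (t_density nu z)%:E <=
   C%:E * \int[mu]_(z in [set z | S (a' + b' * z)%R]) (t_density nu z)%:E)%E.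
Proof.
move=> mS b_gt0 b'_gt0 C_ge0 ls_le.
have ls_ge0 (c d : R) y : 0 < d -> S y -> (0 <= (t_locscale_density nu c d y)%:E)%E.
  by move=> d_gt0 _; rewrite lee_fin t_locscale_density_ge0.
have mls (c d : R) : measurable_fun S (fun y => (t_locscale_density nu c d y)%:E).
  by apply/measurable_EFinP/measurable_funTS; exact: measurable_t_locscale_density.
rewrite !t_affine_integralE // -ge0_integralZl ?lee_fin //; last 2 first.
- exact: mls.
- by move=> y; exact: ls_ge0.
apply: ge0_le_integral => //; try by move=> y; exact: ls_ge0.
- exact: mls.
- by apply: measurable_funeM; exact: mls.
- by move=> y _; rewrite -EFinM lee_fin.
Qed.
End t_affine_law.

Lemma local_lip_le_dist {R : realType} {U : Type} {dist : U -> U -> R} {f : U -> R}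
    {Lambda : \bar R} {x x' : U} {K : R} :
  (local_lip dist f Lambda x <= K%:E)%E -> ((dist x x')%:E <= Lambda)%E ->
  0 < dist x x' -> `|f x - f x'| <= K * dist x x'.
Proof.
move=> lipK dxx' d_gt0; apply/ler_addgt0Pr => e e_gt0.
have : (local_lip dist f Lambda x < (K + e / dist x x')%:E)%E.
  by rewrite (le_lt_trans lipK) // lte_fin ltrDl divr_gt0.
move=> /ereal_inf_lt[_ [K' K'_lip <-]]; rewrite lte_fin => K'_lt.
apply: le_trans (K'_lip x' dxx') _.
by rewrite -[e](divfK (lt0r_neq0 d_gt0)) -mulrDl ler_pM2r // ltW.
Qed.

Lemma norm_lnB_le {R : realType} (b b' G : R) : 0 < b -> 0 < b' ->
  b <= expR G * b' -> b' <= expR G * b -> `|ln b - ln b'| <= G.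
Proof.
move=> b_gt0 b'_gt0 bb' b'b.
have ln_le (c c' : R) : 0 < c -> 0 < c' -> c <= expR G * c' -> ln c - ln c' <= G.
  move=> c_gt0 c'_gt0 cc'.
  by rewrite lerBlDr -[G]expRK -lnM ?posrE ?expR_gt0 // ler_ln ?posrE ?mulr_gt0 ?expR_gt0.
by rewrite ler_norml lerNl opprB !ln_le.
Qed.

Section smooth_bound_mechanism.
Context {R : realType} {U : Type} {dist : U -> U -> R}.
Hypothesis dist_sym : forall x y, dist x y = dist y x.
Context {f B : U -> R} {Lambda : \bar R} {gamma eta nu : R}.
Hypothesis hB : smooth_upper_bound dist f Lambda (fun x x' => expR (gamma * dist x x')) B.
Context {x x' : U}.

Lemma smooth_bound_gt0 : 0 < B x -> 0 < B x'.
Proof.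
have [_ [_ B_smooth]] := hB => Bx_gt0.
by rewrite -(pmulr_rgt0 _ (expR_gt0 (gamma * dist x x'))) (lt_le_trans Bx_gt0 (B_smooth x x')).
Qed.

Hypotheses (dxx' : ((dist x x')%:E <= Lambda)%E) (d_gt0 : 0 < dist x x').

Lemma mech_prob_scale0 (S : set R) : B x = 0 ->
  mech_prob f B eta nu x S = mech_prob f B eta nu x' S.
Proof.
have [B_ge0 [B_lip B_smooth]] := hB => Bx0.
have Bx'0 : B x' = 0 by apply/le_anti; rewrite B_ge0 (le_trans (B_smooth x' x)) // Bx0 mulr0.
have := local_lip_le_dist (B_lip x) dxx' d_gt0.
by rewrite Bx0 mul0r normr_le0 subr_eq0 /mech_prob Bx0 Bx'0 => /eqP ->.
Qed.

Hypotheses (eta_gt0 : 0 < eta) (nu_ge1 : 1 <= nu).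

Lemma mech_density_le (y : R) : 0 < B x ->
  t_locscale_density nu (f x) (B x / eta) y <=
    expR ((nu * gamma + (nu + 1) / (2 * Num.sqrt nu) * eta) * dist x x') *
    t_locscale_density nu (f x') (B x' / eta) y.
Proof.
have [_ [B_lip B_smooth]] := hB => Bx_gt0.
have Bx'_gt0 := smooth_bound_gt0 Bx_gt0.
rewrite mulrDl -!(mulrA _ _ (dist x x')).
apply: t_locscale_density_le; rewrite ?divr_gt0 //.
- apply: norm_lnB_le; rewrite ?divr_gt0 // mulrA ler_pM2r ?invr_gt0 //.
  by rewrite [in X in X * B x]dist_sym.
- have -> : eta * dist x x' * (B x / eta) = B x * dist x x' by field; rewrite gt_eqF.
  exact: local_lip_le_dist (B_lip x) dxx' d_gt0.
Qed.

End smooth_bound_mechanism.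

Theorem mainTheorem5 (R : realType) (U : Type) (dist : U -> U -> R)
  (dist_ge0 : forall x y, 0 <= dist x y)
  (dist_eq0 : forall x y, dist x y = 0 <-> x = y)
  (dist_sym : forall x y, dist x y = dist y x)
  (dist_tri : forall x y z, dist x z <= dist x y + dist y z)
  (gamma eta nu : R) (Lambda : \bar R)
  (hgamma : 0 < gamma) (heta : 0 < eta) (hLambda : (0 < Lambda)%E) (hnu : 1 < nu)
  (f B : U -> R)
  (hB : smooth_upper_bound dist f Lambda (fun x x' => expR (gamma * dist x x')) B) :
  let eps := nu * gamma + (nu + 1) / (2 * Num.sqrt nu) * eta in
  forall (S : set R), measurable S ->
  forall x x' : U, ((dist x x')%:E <= Lambda)%E ->
    (mech_prob f B eta nu x S
       <= (expR (eps * dist x x'))%:E * mech_prob f B eta nu x' S + 0%:E)%E.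
Proof.
move=> eps S mS x x' dxx'; rewrite adde0.
have eps_ge0 : 0 <= eps.
  have nu_gt0 : 0 < nu by lra.
  by rewrite /eps addr_ge0 ?mulr_ge0 ?invr_ge0 ?mulr_ge0 ?sqrtr_ge0 ?addr_ge0 ?ltW.
have le_of_eq : mech_prob f B eta nu x S = mech_prob f B eta nu x' S ->
    (mech_prob f B eta nu x S <= (expR (eps * dist x x'))%:E * mech_prob f B eta nu x' S)%E.
  move=> ->; rewrite lee_pemull ?lee_fin -?expR0 ?ler_expR ?mulr_ge0 //.
  by apply: integral_ge0 => z _; rewrite lee_fin t_density_ge0.
have [d0|d_neq0] := eqVneq (dist x x') 0.
  by apply: le_of_eq; move/dist_eq0: d0 => ->.
have d_gt0 : 0 < dist x x' by rewrite lt_neqAle eq_sym d_neq0 dist_ge0.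
have [Bx0|Bx_neq0] := eqVneq (B x) 0.
  exact/le_of_eq/(mech_prob_scale0 hB dxx' d_gt0 S Bx0).
have Bx_gt0 : 0 < B x by rewrite lt_neqAle eq_sym Bx_neq0; case: hB => ->.
have Bx'_gt0 := smooth_bound_gt0 hB Bx_gt0.
rewrite /mech_prob; apply: t_affine_prob_le; rewrite ?divr_gt0 ?expR_ge0 // => y.
by apply: (mech_density_le dist_sym hB dxx' d_gt0); rewrite ?ltW.
Qed.
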